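(* Let $\mathcal{C}$ be a closed assembler and $\mathcal{D}$ a subassembler which is a sieve in $\mathcal{C}$, and suppose that $\mathcal{C}$ has complements for all objects of $\mathcal{D}$. Let $\{f_i:A_i\to B\}_{i\in I}$ be a finite collection of morphisms in $\mathcal{C}$ such that $A_i\times_BA_{i'}\in\mathcal{D}$ for all $i\neq i'$. Then there exists a morphism $g:\{Z_k\}_{k\in K}\to\{A_i\}_{i\in I}$ in $\mathcal{W}(\mathcal{C})$ such that for all $k\neq k'$ in $K$ the morphisms $f_{g(k)}g_k$ and $f_{g(k')}g_{k'}$ are either equal or disjoint, and if they are equal then $g(k)\neq g(k')$.
   Context: An assembler is a small category with a Grothendieck topology satisfying: (I) there is an initial object $\varnothing$ covered by the empty family; (R) any two finite disjoint covering families of an object have a common refinement which is a finite disjoint covering family; (M) all morphisms are monomorphisms. Maps $A\to C$, $B\to C$ are disjoint if $A\times_CB$ exists and is initial. An assembler is closed if it has all pullbacks. A subassembler is a subcategory which is an assembler and whose inclusion is continuous and preserves the initial object and disjointness. A sieve is a full subcategory $\mathcal{D}$ such that whenever $A\to B$ is a morphism with $B\in\mathcal{D}$ then $A\in\mathcal{D}$. $\mathcal{C}$ has complements for $A$ if every morphism $A\to B$ belongs to a finite disjoint covering family of $B$. $\mathcal{W}(\mathcal{C})$ is the category whose objects are finite families $\{A_i\}_{i\in I}$ of noninitial objects, and whose morphisms $\{Z_k\}_{k\in K}\to\{A_i\}_{i\in I}$ are a map $g:K\to I$ with morphisms $g_k:Z_k\to A_{g(k)}$ such that for each $i$, $\{g_k\}_{k\in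 g^{-1}(i)}$ is a finite disjoint covering family of $A_i$. *)

From mathcomp Require Import all_boot.
Set Implicit Arguments. Unset Strict Implicit. Unset Printing Implicit Defensive.

Record Cat := {
  Obj :> Type;
  Hom : Obj -> Obj -> Type;
  idm : forall A, Hom A A;
  compm : forall A B C, Hom B C -> Hom A B -> Hom A C;
  comp_idl : forall A B (f : Hom A B), compm (idm B) f = f;
  comp_idr : forall A B (f : Hom A B), compm f (idm A) = f;
  comp_assoc : forall A B C D (h : Hom C D) (g : Hom B C) (f : Hom A B),
      compm h (compm g f) = compm (compm h g) f
}.
Arguments Hom {c}.
Arguments idm {c}.
Arguments compm {c A B C}.

Section CatDefs.
Variable C : Cat.

Definition initial (X : C) : Prop :=
  forall Y : C, exists h : Hom X Y, forall h' : Hom X Y, h' = h.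

Definition mono (A B : C) (f : Hom A B) : Prop :=
  forall X (u v : Hom X A), compm f u = compm f v -> u = v.

Definition is_pullback (A B D : C) (f : Hom A D) (g : Hom B D)
    (P : C) (p1 : Hom P A) (p2 : Hom P B) : Prop :=
  compm f p1 = compm g p2 /\
  forall X (q1 : Hom X A) (q2 : Hom X B), compm f q1 = compm g q2 ->
    exists u : Hom X P, (compm p1 u = q1 /\ compm p2 u = q2) /\
      forall u' : Hom X P, compm p1 u' = q1 -> compm p2 u' = q2 -> u' = u.

Definition closed_cat : Prop :=
  forall (A B D : C) (f : Hom A D) (g : Hom B D),
    exists P (p1 : Hom P A) (p2 : Hom P B), is_pullback f g p1 p2.

Definition disjoint_maps (A B D : C) (f : Hom A D) (g : Hom B D) : Prop :=
  exists P (p1 : Hom P A) (p2 : Hom P B), is_pullback f g p1 p2 /\ initial P.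

Record sieve (B : C) := {
  sv : forall X : C, Hom X B -> Prop;
  sv_closed : forall (X Y : C) (f : Hom X B) (h : Hom Y X), sv f -> sv (compm f h)
}.

Definition maxsieve (B : C) : sieve B.
Proof. exists (fun X (_ : Hom X B) => True). by []. Defined.

Definition pb_sieve (A B : C) (f : Hom A B) (S : sieve B) : sieve A.
Proof.
  exists (fun X (h : Hom X A) => sv S (compm f h)).
  move=> X Y g h H. rewrite comp_assoc. exact: sv_closed.
Defined.

Definition gen_sieve (I : Type) (A : I -> C) (B : C) (f : forall i, Hom (A i) B)
  : sieve B.
Proof.
  exists (fun X (h : Hom X B) => exists i (u : Hom X (A i)), h = compm (f i) u).
  move=> X Y g h [i [u ->]]. exists i, (compm u h). by rewrite comp_assoc.
Defined.

Record topology := {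
  covers : forall B : C, sieve B -> Prop;
  top_max : forall B, covers (maxsieve B);
  top_stab : forall (A B : C) (f : Hom A B) (S : sieve B),
      covers S -> covers (pb_sieve f S);
  top_trans : forall (B : C) (S R : sieve B), covers S ->
      (forall X (f : Hom X B), sv S f -> covers (pb_sieve f R)) -> covers R
}.

Variable J : topology.

Definition covering_family (I : Type) (A : I -> C) (B : C)
    (f : forall i, Hom (A i) B) : Prop :=
  covers J (gen_sieve f).

Definition fdc_family (I : finType) (A : I -> C) (B : C)
    (f : forall i, Hom (A i) B) : Prop :=
  covering_family f /\ forall i j, i <> j -> disjoint_maps (f i) (f j).

Definition refines (K I : Type) (Z : K -> C) (A : I -> C) (B : C)
    (g : forall k, Hom (Z k) B) (f : forall i, Hom (A i) B) : Prop :=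
  forall k, exists i (u : Hom (Z k) (A i)), g k = compm (f i) u.

Definition has_complements_for (A : C) : Prop :=
  forall (B : C) (f : Hom A B),
    exists (I : finType) (Ai : I -> C) (h : forall i, Hom (Ai i) B) (i0 : I),
      fdc_family h /\
      existT (fun X : C => Hom X B) (Ai i0) (h i0) = existT (fun X : C => Hom X B) A f.

End CatDefs.

Arguments covering_family {C} J {I A B} f.
Arguments fdc_family {C} J {I A B} f.

Record assembler (C : Cat) := {
  atop : topology C;
  asm_I : exists E : C, initial E /\
      covering_family atop (fun v : void => match v return Hom (match v with end) E with end);
  asm_R : forall (B : C) (I1 I2 : finType) (A1 : I1 -> C) (A2 : I2 -> C)
      (f1 : forall i, Hom (A1 i) B) (f2 : forall i, Hom (A2 i) B),
      fdc_family atop f1 -> fdc_family atop f2 ->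
      exists (K : finType) (Z : K -> C) (g : forall k, Hom (Z k) B),
        fdc_family atop g /\ refines g f1 /\ refines g f2;
  asm_M : forall (A B : C) (f : Hom A B), mono f
}.

Section FullSub.
Variable C : Cat.
Variable inD : C -> Prop.

Definition fs_obj := {A : C | inD A}.
Definition fs_hom (A B : fs_obj) := Hom (proj1_sig A) (proj1_sig B).

Definition fullsub : Cat :=
  @Build_Cat fs_obj fs_hom (fun A => idm (proj1_sig A))
    (fun A B D g f => compm g f)
    (fun A B f => comp_idl f) (fun A B f => comp_idr f)
    (fun A B D E h g f => comp_assoc h g f).

Definition is_sieve : Prop :=
  forall (A B : C) (f : Hom A B), inD B -> inD A.

End FullSub.

Definition subassembler (C : Cat) (AC : assembler C) (inD : C -> Prop)
    (AD : assembler (fullsub inD)) : Prop :=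
  (forall (I : Type) (A : I -> fullsub inD) (B : fullsub inD)
     (f : forall i, @Hom (fullsub inD) (A i) B),
     covering_family (atop AD) f ->
     covering_family (atop AC) (A := fun i => proj1_sig (A i)) (B := proj1_sig B) f) /\
  (forall E : fullsub inD, initial E -> initial (proj1_sig E)) /\
  (forall (A B D : fullsub inD) (f : @Hom (fullsub inD) A D) (g : @Hom (fullsub inD) B D),
     disjoint_maps f g -> @disjoint_maps C _ _ _ f g).

Definition fiber_mor (C : Cat) (K I : finType) (Z : K -> C) (A : I -> C)
    (g : K -> I) (gk : forall k, Hom (Z k) (A (g k))) (i : I)
    (x : {k : K | g k == i}) : Hom (Z (val x)) (A i) :=
  match eqP (valP x) in _ = j return Hom (Z (val x)) (A j) with
  | erefl => gk (val x)
  end.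

(** (g, (g_k)) : {Z_k}_K -> {A_i}_I is a morphism of W(C) (the source
    being an object of W(C): all Z_k noninitial) *)
Definition W_morphism (C : Cat) (J : topology C) (K I : finType)
    (Z : K -> C) (A : I -> C) (g : K -> I) (gk : forall k, Hom (Z k) (A (g k))) : Prop :=
  (forall k, ~ initial (Z k)) /\
  forall i : I, fdc_family J (A := fun x : {k : K | g k == i} => Z (val x))
                  (fiber_mor gk (i := i)).

From mathcomp Require Import all_boot.
From mathcomp Require Import boolp.
Set Implicit Arguments. Unset Strict Implicit. Unset Printing Implicit Defensive.

(* The family is built one index i0 at a time, keeping every pair of members either
   with equal composites to B and different tags, or disjoint over B.  To add i0,
   each old member Z_k is refined by a finite disjoint cover containing its pullback
   Z_k x_B A_i0 (which lies in the sieve D, hence has a complement), and A_i0 is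
   covered by a finite disjoint family containing the second projections of these
   pullbacks (coinciding or disjoint, as the old members are), every other member
   being disjoint from all of them; this uses complements and common refinements.
   Finally the initial members are discarded: separation then makes each fiber
   disjoint, and a disjointness between equal maps forces an initial source. *)

Section Topology.
Variables (C : Cat) (J : topology C).

Lemma sieve_ext (B : C) (S R : sieve B) :
  (forall X (h : Hom X B), sv S h <-> sv R h) -> S = R.
Proof.
case: S R => s sc [r rc] /= sr.
have srE : s = r.
  by apply: functional_extensionality_dep => X; apply/funext => h; apply/propext.
by subst r; f_equal; apply: Prop_irrelevance.
Qed.

Lemma coversS (B : C) (S R : sieve B) :
  covers J S -> (forall X (h : Hom X B), sv S h -> sv R h) -> covers J R.
Proof.
move=> covS SR; apply: (top_trans covS) => X h Sh.
have -> : pb_sieve h R = maxsieve X.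
  by apply: sieve_ext => Y u /=; split=> // _; apply/SR/sv_closed.
exact: top_max.
Qed.

End Topology.

Definition slice (C : Cat) (Y : C) := {X : C & Hom X Y}.

Definition to_slice (C : Cat) (X Y : C) (h : Hom X Y) : slice Y :=
  Tagged (fun X => Hom X Y) h.

Definition slice_comp (C : Cat) (Y Y' : C) (m : Hom Y Y') (s : slice Y) : slice Y' :=
  to_slice (compm m (projT2 s)).

Section Disjointness.
Variable C : Cat.

(* Needs no chosen pullback; in a closed assembler it agrees with [disjoint_maps]. *)
Definition disj (X Y D : C) (f : Hom X D) (g : Hom Y D) : Prop :=
  forall W (u : Hom W X) (v : Hom W Y), compm f u = compm g v -> initial W.

Variables (X Y D : C) (f : Hom X D) (g : Hom Y D).

Lemma disj_eq (Y' : C) (g' : Hom Y' D) : to_slice g = to_slice g' -> disj f g -> disj f g'.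
Proof.
move=> E; change (disj f (projT2 (to_slice g)) -> disj f (projT2 (to_slice g'))).
by rewrite E.
Qed.

Lemma disjC : disj f g -> disj g f.
Proof. by move=> fg W u v /esym; apply: fg. Qed.

Lemma disj_comp (X' Y' : C) (a : Hom X' X) (b : Hom Y' Y) :
  disj f g -> disj (compm f a) (compm g b).
Proof. by move=> fg W u v E; apply: (fg W (compm a u) (compm b v)); rewrite !comp_assoc. Qed.

Lemma disj_compl (X' : C) (a : Hom X' X) : disj f g -> disj (compm f a) g.
Proof. by move=> fg; rewrite -(comp_idr g); apply: disj_comp. Qed.

Lemma disj_compr (Y' : C) (b : Hom Y' Y) : disj f g -> disj f (compm g b).
Proof. by move=> fg; rewrite -(comp_idr f); apply: disj_comp. Qed.

Lemma disj_postK (D' : C) (m : Hom D D') : disj (compm m f) (compm m g) -> disj f g.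
Proof. by move=> mfg W u v E; apply: (mfg W u v); rewrite -!comp_assoc E. Qed.

End Disjointness.

Lemma disj_initial (C : Cat) (X D : C) (f : Hom X D) : disj f f -> initial X.
Proof. by move/(_ X (idm X) (idm X)); apply. Qed.

Definition factors (C : Cat) (W Y : C) (h : Hom W Y) (s : slice Y) : Prop :=
  exists u : Hom W (projT1 s), h = compm (projT2 s) u.

Record family (C : Cat) (Y : C) := Family {
  fam_idx : finType;
  fam_obj : fam_idx -> C;
  fam_map : forall x, Hom (fam_obj x) Y
}.
Arguments fam_obj {C Y} f x.
Arguments fam_map {C Y} f x.

Section Assembler.
Variables (C : Cat) (AC : assembler C).
Local Notation J := (atop AC).

Lemma initial_of_hom (X E : C) (m : Hom X E) : initial E -> initial X.
Proof.
move=> iniE; have [u _] := iniE X.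
have mu : compm m u = idm E.
  by have [h hE] := iniE E; rewrite (hE (compm m u)) (hE (idm E)).
have um : compm u m = idm X.
  by apply: (@asm_M _ AC _ _ m); rewrite comp_assoc mu comp_idl comp_idr.
move=> Y; have [h hE] := iniE Y; exists (compm h m) => h'.
by rewrite -(hE (compm h' u)) -comp_assoc um comp_idr.
Qed.

Lemma covers_initial (X : C) (R : sieve X) : initial X -> covers J R.
Proof.
move=> iniX; have [E [_ covE]] := asm_I AC; have [h _] := iniX E.
by apply: (coversS (top_stab h covE)) => Y y /= [[]].
Qed.

Lemma disj_post (X Y D D' : C) (f : Hom X D) (g : Hom Y D) (m : Hom D D') :
  disj f g -> disj (compm m f) (compm m g).
Proof.
by move=> fg W u v E; apply: (fg W u v); apply: (@asm_M _ AC _ _ m); rewrite !comp_assoc.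
Qed.

Lemma disjoint_maps_disj (X Y D : C) (f : Hom X D) (g : Hom Y D) :
  disjoint_maps f g -> disj f g.
Proof.
move=> [P [p1 [p2 [[_ univ] iniP]]]] W u v E.
by have [w _] := univ W u v E; apply: initial_of_hom iniP.
Qed.

Hypothesis closed : closed_cat C.

Lemma disj_disjoint_maps (X Y D : C) (f : Hom X D) (g : Hom Y D) :
  disj f g -> disjoint_maps f g.
Proof.
move=> fg; have [P [p1 [p2 pb]]] := closed f g.
by exists P, p1, p2; split=> //; apply: (fg P p1 p2); case: pb.
Qed.

Lemma fdc_familyP (I : finType) (A : I -> C) (Y : C) (h : forall i, Hom (A i) Y) :
  fdc_family J h <-> covering_family J h /\ forall i j, i <> j -> disj (h i) (h j).
Proof.
split=> -[covh dish]; split=> // i j ij.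
  exact/disjoint_maps_disj/dish.
exact/disj_disjoint_maps/dish.
Qed.

Definition pullback (X Y D : C) (u : Hom X D) (v : Hom Y D) :
  {P : C & {p1 : Hom P X & {p2 : Hom P Y | is_pullback u v p1 p2}}}.
Proof.
have [P /cid[p1 /cid[p2 pb]]] := cid (closed u v).
exact: existT _ P (existT _ p1 (exist _ p2 pb)).
Defined.

Section ChosenPullback.
Variables (X Y D : C) (u : Hom X D) (v : Hom Y D).

Definition pb_obj : C := projT1 (pullback u v).
Definition pb_fst : Hom pb_obj X := projT1 (projT2 (pullback u v)).
Definition pb_snd : Hom pb_obj Y := proj1_sig (projT2 (projT2 (pullback u v))).

Lemma pb_objP : is_pullback u v pb_fst pb_snd.
Proof. exact: proj2_sig (projT2 (projT2 (pullback u v))). Qed.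

End ChosenPullback.

Section Complements.
Variable inD : C -> Prop.
Hypothesis complements : forall X : C, inD X -> has_complements_for J X.

Definition splits_off (X Y : C) (F : family Y) (u : Hom X Y) : Prop :=
  fdc_family J (fam_map F) /\
  forall x, to_slice (fam_map F x) = to_slice u \/ disj (fam_map F x) u.

Lemma complement_family (X Y : C) (u : Hom X Y) : inD X ->
  exists F : family Y, splits_off F u.
Proof.
move=> DX; have [I' [A' [h [i0 [fdch hi0]]]]] := complements DX u.
exists (Family h); split=> // i; case: (eqVneq i i0) => [-> | ii0]; first by left.
right; apply: (disj_eq hi0); apply: disjoint_maps_disj; apply: fdch.2; exact/eqP.
Qed.

Lemma split_along_subproof (X Y : C) (u : Hom X Y) :
  exists F : family Y, inD X -> splits_off F u.
Proof.
case: (pselect (inD X)) => [/(complement_family u) [F spec] | nDX]; first by exists F.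
by exists (Family (fun _ : unit => idm Y)) => /nDX.
Qed.

Definition split_along (X Y : C) (u : Hom X Y) : family Y :=
  proj1_sig (cid (split_along_subproof u)).

Lemma split_alongP (X Y : C) (u : Hom X Y) : inD X -> splits_off (split_along u) u.
Proof. exact: proj2_sig (cid (split_along_subproof u)). Qed.

Lemma fdc_adjoin (Y X0 : C) (F : family Y) (P : fam_idx F -> Prop) (a0 : Hom X0 Y) :
  fdc_family J (fam_map F) -> inD X0 -> (forall k, P k -> disj (fam_map F k) a0) ->
  exists F' : family Y, fdc_family J (fam_map F') /\ forall x,
    (exists2 k, P k & to_slice (fam_map F' x) = to_slice (fam_map F k)) \/
    to_slice (fam_map F' x) = to_slice a0 \/
    (disj (fam_map F' x) a0 /\ exists2 k, ~ P k & factors (fam_map F' x) (to_slice (fam_map F k))).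
Proof.
move=> fdcF DX0 Pa0; have [G [fdcG Ga0]] := complement_family a0 DX0.
have [K [Z [h [fdch [hF hG]]]]] := asm_R fdcF fdcG.
have /fdc_familyP[covh dish] := fdch; have /fdc_familyP[_ disF] := fdcF.
pose rest z := disj (h z) a0 /\ exists2 k, ~ P k & factors (h z) (to_slice (fam_map F k)).
pose idx := ({k | `[< P k >]} + unit + {z | `[< rest z >]})%type.
pose obj (x : idx) := match x with
  | inl (inl k) => fam_obj F (val k) | inl (inr _) => X0 | inr z => Z (val z) end.
pose map (x : idx) : Hom (obj x) Y := match x with
  | inl (inl k) => fam_map F (val k) | inl (inr _) => a0 | inr z => h (val z) end.
(* A member of the common refinement [h] of [F] and of a complement of [a0] lies under
   a kept member of [F], or under [a0], or is disjoint from [a0]. *)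
have keep_rest k z : disj (map (inl (inl k))) (map (inr z)).
  rewrite /map /=; have [_ [k' nPk' [w ->]]] := asboolW (valP z).
  apply/disj_compr/disF => kk'; apply: nPk'; rewrite -kk'; exact: asboolW (valP k).
exists (Family map); split=> [|x].
  apply/fdc_familyP; split=> [|x y xy].
    apply: (coversS covh) => W _ [z [w ->]]; have [k [u hk]] := hF z.
    case: (pselect (P k)) => Pk.
      by exists (inl (inl (exist _ k (asboolT Pk)))), (compm u w); rewrite /= hk comp_assoc.
    have [j [v hj]] := hG z; case: (Ga0 j) => [Ej | Dj].
      have [w' hw'] : factors (compm (h z) w) (to_slice a0).
        by rewrite -Ej; exists (compm v w); rewrite hj comp_assoc.
      by exists (inl (inr tt)), w'.
    have restz : rest z by split; [rewrite hj; apply: disj_compl | exists k => //; exists u].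
    by exists (inr (exist _ z (asboolT restz))), w.
  move: x y xy => [[k|[]]|z] [[k'|[]]|z'] //= xy.
  - by apply: disF => kk'; apply: xy; do 2 f_equal; apply: val_inj.
  - exact: Pa0 (asboolW (valP k)).
  - exact: keep_rest.
  - exact: disjC (Pa0 _ (asboolW (valP k'))).
  - exact: disjC (asboolW (valP z')).1.
  - exact: disjC (keep_rest _ _).
  - exact: (asboolW (valP z)).1.
  - by apply: dish => zz'; apply: xy; f_equal; apply: val_inj.
case: x => [[k|[]]|z] /=; [left; exists (val k) | right; left | right; right] => //.
  exact: asboolW (valP k).
exact: asboolW (valP z).
Qed.

Lemma extend_to_fdc (Y : C) (L : eqType) (X : L -> C) (a : forall l, Hom (X l) Y) (s : seq L) :
  (forall l, inD (X l)) ->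
  (forall l l', to_slice (a l) = to_slice (a l') \/ disj (a l) (a l')) ->
  exists F : family Y, fdc_family J (fam_map F) /\ forall x,
    (exists2 l, l \in s & to_slice (fam_map F x) = to_slice (a l)) \/
    (forall l, l \in s -> disj (fam_map F x) (a l)).
Proof.
move=> DX sep; elim: s => [|l0 s [F [fdcF Fs]]].
  exists (Family (fun _ : unit => idm Y)); split=> [|x]; last by right.
  apply/fdc_familyP; split=> [|[] []] //.
  by apply: (coversS (top_max _ Y)) => W h _; exists tt, h; rewrite comp_idl.
case: (pselect (exists2 l, l \in s & to_slice (a l0) = to_slice (a l))) => [[l ls El] | new].
  exists F; split=> // x; case: (Fs x) => [[l' ls' E] | D].
    by left; exists l'; rewrite // in_cons ls' orbT.
  by right=> l'; rewrite in_cons => /orP[/eqP-> | /D //]; exact: disj_eq (esym El) (D l ls).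
have a0s l : l \in s -> disj (a l0) (a l).
  by move=> ls; case: (sep l0 l) => // E; case: new; exists l.
pose P k := exists2 l, l \in s & to_slice (fam_map F k) = to_slice (a l).
have [|F' [fdcF' F'cases]] := @fdc_adjoin _ _ F P (a l0) fdcF (DX l0).
  by move=> k [l ls El]; exact/disjC/(disj_eq (esym El))/a0s.
exists F'; split=> // x.
case: (F'cases x) => [[k [l ls El] Ek] | [E0 | [D0 [k nPk [w Ew]]]]].
- by left; exists l; rewrite ?in_cons ?ls ?orbT ?Ek.
- by left; exists l0; rewrite ?mem_head.
- right=> l; rewrite in_cons => /orP[/eqP-> // | ls]; rewrite Ew; apply: disj_compl.
  by case: (Fs k) => [Pk | /(_ l ls)//]; case: nPk.
Qed.

End Complements.
End Assembler.

Section Fibers.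
Variables (C : Cat) (K I : finType) (Z : K -> C) (A : I -> C) (g : K -> I)
  (gk : forall k, Hom (Z k) (A (g k))).

Definition fiber_sieve (i : I) : sieve (A i).
Proof.
exists (fun X (h : Hom X (A i)) => exists k (u : Hom X (Z k)),
  Tagged (fun j => Hom X (A j)) (compm (gk k) u) = Tagged (fun j => Hom X (A j)) h).
move=> X Y h v [k [u E]]; exists k, (compm u v).
pose restrict (t : {j : I & Hom X (A j)}) := Tagged (fun j => Hom Y (A j)) (compm (tagged t) v).
by have := congr1 restrict E; rewrite /= comp_assoc.
Defined.

Lemma fiber_morE i (x : {k | g k == i}) :
  Tagged (fun j => Hom (Z (val x)) (A j)) (fiber_mor gk x) =
  Tagged (fun j => Hom (Z (val x)) (A j)) (gk (val x)).
Proof.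
have castE k j (e : g k = j) :
    Tagged (fun j => Hom (Z k) (A j))
      (match e in _ = j return Hom (Z k) (A j) with erefl => gk k end) =
    Tagged (fun j => Hom (Z k) (A j)) (gk k) by case: _ / e.
exact: castE.
Qed.

Lemma fiber_mor_tag k (e : g k == g k) : fiber_mor gk (exist _ k e) = gk k.
Proof. exact: eq_from_Tagged (fiber_morE (exist _ k e)). Qed.

End Fibers.

Section Construction.
Variables (C : Cat) (AC : assembler C).
Local Notation J := (atop AC).
Hypothesis closed : closed_cat C.
Variable inD : C -> Prop.
Hypothesis inD_sieve : is_sieve inD.
Hypothesis complements : forall X : C, inD X -> has_complements_for J X.
Variables (I : finType) (A : I -> C) (B : C) (f : forall i, Hom (A i) B).
Hypothesis pullback_in_D : forall i i', i <> i' ->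
  exists (P : C) (p1 : Hom P (A i)) (p2 : Hom P (A i')),
    is_pullback (f i) (f i') p1 p2 /\ inD P.

Definition leg (K : finType) (Z : K -> C) (g : K -> I) (gk : forall k, Hom (Z k) (A (g k)))
    (k : K) : slice B :=
  to_slice (compm (f (g k)) (gk k)).

Definition separated (i i' : I) (s s' : slice B) : Prop :=
  (s = s' /\ i <> i') \/ disj (projT2 s) (projT2 s').

Lemma separatedC i i' s s' : separated i i' s s' -> separated i' i s' s.
Proof. by case=> [[-> ii'] | /disjC]; [left; split=> // /esym | right]. Qed.

(* The conclusion for the indices in [s], except that members may be initial and
   the fibers need only cover: their disjointness follows from separation. *)
Definition partial_solution (s : seq I) : Prop :=
  exists (K : finType) (Z : K -> C) (g : K -> I) (gk : forall k, Hom (Z k) (A (g k))),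
    [/\ forall k, g k \in s,
        forall i, i \in s -> covers J (fiber_sieve gk i) &
        forall k k', k <> k' -> separated (g k) (g k') (leg gk k) (leg gk k')].

Lemma partial_solution_nil : partial_solution [::].
Proof.
exists void, (fun v : void => match v with end), (fun v : void => match v with end).
by exists (fun v : void => match v with end); split=> [[] | i | []].
Qed.

Lemma partial_solution_dup i0 s : i0 \in s -> partial_solution s -> partial_solution (i0 :: s).
Proof.
move=> i0s [K [Z [g [gk [gs covs sep]]]]]; exists K, Z, g, gk; split=> // [k | i].
  by rewrite in_cons gs orbT.
by rewrite in_cons => /orP[/eqP-> |]; apply: covs.
Qed.

Section Step.
Variables (i0 : I) (s : seq I) (K : finType) (Z : K -> C) (g : K -> I)
  (gk : forall k, Hom (Z k) (A (g k))).
Hypotheses (i0_new : i0 \notin s) (g_in_s : forall k, g k \in s)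
  (covers_s : forall i, i \in s -> covers J (fiber_sieve gk i))
  (sep : forall k k', k <> k' -> separated (g k) (g k') (leg gk k) (leg gk k')).

Local Notation cut t := (pb_obj closed (projT2 t) (f i0)).
Local Notation cut_fst t := (pb_fst closed (projT2 t) (f i0)).
Local Notation cut_snd t := (pb_snd closed (projT2 t) (f i0)).
Local Notation cutP t := (pb_objP closed (projT2 t) (f i0)).
(* [piece t] depends on the leg [t] only, so coinciding legs are refined identically. *)
Local Notation piece t := (split_along complements (cut_fst t)).

Lemma g_neq_i0 k : g k <> i0.
Proof. by move=> gki0; move: i0_new; rewrite -gki0 g_in_s. Qed.

Lemma cut_in_D k : inD (cut (leg gk k)).
Proof.
have [P [p1 [p2 [[_ univ] DP]]]] := pullback_in_D (g_neq_i0 (k:=k)).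
have sq : compm (f (g k)) (compm (gk k) (cut_fst (leg gk k))) =
          compm (f i0) (cut_snd (leg gk k)).
  by rewrite comp_assoc; exact: (cutP (leg gk k)).1.
have [w _] := univ _ _ _ sq.
exact: inD_sieve DP.
Qed.

Lemma cut_snd_sep k k' :
  to_slice (cut_snd (leg gk k)) = to_slice (cut_snd (leg gk k')) \/
  disj (cut_snd (leg gk k)) (cut_snd (leg gk k')).
Proof.
case: (eqVneq k k') => [-> | /eqP kk']; first by left.
case: (sep kk') => [[E _] | D]; first by left; rewrite E.
right=> W u v E.
apply: (D W (compm (cut_fst (leg gk k)) u) (compm (cut_fst (leg gk k')) v)).
by rewrite !comp_assoc (cutP (leg gk k)).1 (cutP (leg gk k')).1 -!comp_assoc E.
Qed.

Lemma piece_vs_cut (t : slice B) (x : fam_idx (piece t)) : inD (cut t) ->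
  to_slice (compm (projT2 t) (fam_map _ x)) = to_slice (compm (f i0) (cut_snd t)) \/
  disj (compm (projT2 t) (fam_map _ x)) (compm (f i0) (cut_snd t)).
Proof.
move=> Dt; have [_ split] := split_alongP complements (cut_fst t) Dt.
rewrite -(cutP t).1; case: (split x) => [E | D].
  by left; apply: (congr1 (slice_comp (projT2 t)) E).
by right; apply: (disj_post AC).
Qed.

Lemma piece_vs_piece (t t' : slice B) (x : fam_idx (piece t)) (x' : fam_idx (piece t')) :
  t = t' -> inD (cut t) ->
  to_slice (compm (projT2 t) (fam_map _ x)) = to_slice (compm (projT2 t') (fam_map _ x')) \/
  disj (compm (projT2 t) (fam_map _ x)) (compm (projT2 t') (fam_map _ x')).
Proof.
move=> tt' Dt; subst t'; case: (eqVneq x x') => [-> | /eqP xx']; first by left.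
have [/(fdc_familyP AC closed)[_ dis] _] := split_alongP complements (cut_fst t) Dt.
by right; apply/(disj_post AC)/dis.
Qed.

Section Refinement.
Variable G : family (A i0).
Hypotheses (fdcG : fdc_family J (fam_map G))
  (G_cases : forall y,
    (exists2 k, k \in enum K & to_slice (fam_map G y) = to_slice (cut_snd (leg gk k))) \/
    (forall k, k \in enum K -> disj (fam_map G y) (cut_snd (leg gk k)))).

Definition step_idx : finType := ({k : K & fam_idx (piece (leg gk k))} + fam_idx G)%type.

Definition step_obj (x : step_idx) : C :=
  match x with inl p => fam_obj _ (projT2 p) | inr y => fam_obj G y end.

Definition step_tag (x : step_idx) : I :=
  match x with inl p => g (projT1 p) | inr _ => i0 end.

Definition step_map (x : step_idx) : Hom (step_obj x) (A (step_tag x)) :=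
  match x with
  | inl p => compm (gk (projT1 p)) (fam_map _ (projT2 p))
  | inr y => fam_map G y
  end.

Lemma step_tag_in x : step_tag x \in i0 :: s.
Proof. by case: x => [[k p] | y]; rewrite in_cons ?eqxx ?g_in_s ?orbT. Qed.

Lemma step_covers i : i \in i0 :: s -> covers J (fiber_sieve step_map i).
Proof.
rewrite in_cons => /orP[/eqP-> | i_s].
  by apply: (coversS fdcG.1) => X _ [y [w ->]]; exists (inr y), w.
apply: (top_trans (covers_s i_s)) => X h [k [u E]].
have gki : g k = i := congr1 tag E; subst i.
have {E} -> := eq_from_Tagged (esym E).
have [[covk _] _] := split_alongP complements (cut_fst (leg gk k)) (cut_in_D k).
apply: (coversS (top_stab u covk)) => Y y [x [z Ez]] /=.
by exists (inl (existT _ k x)), z; rewrite /= -!comp_assoc -Ez.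
Qed.

Lemma piece_vs_low k x y :
  separated (g k) i0 (leg step_map (inl (existT _ k x))) (leg step_map (inr y)).
Proof.
rewrite /separated /leg /= comp_assoc.
have Dk := cut_in_D k.
case: (G_cases y) => [[k'' _ Ey] | Dy]; last first.
  right=> W u v E; have [_ univ] := cutP (leg gk k).
  have sq : compm (projT2 (leg gk k)) (compm (fam_map _ x) u) =
            compm (f i0) (compm (fam_map G y) v) by rewrite !comp_assoc.
  have [w [[_ Ew] _]] := univ W _ _ sq.
  exact: (Dy k (mem_enum _ _) W v w (esym Ew)).
have Eyf := congr1 (slice_comp (f i0)) (esym Ey).
case: (pselect (leg gk k = leg gk k'')) => [Ekk | nEkk].
  rewrite -Ekk in Eyf; case: (piece_vs_cut x Dk) => [E | D].
    by left; split; [rewrite E | exact: g_neq_i0].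
  by right; apply: disj_eq D.
have kk'' : k <> k'' by move=> kk; apply: nEkk; rewrite kk.
case: (sep kk'') => [[E _] // | D]; right; apply: disj_eq Eyf _.
by rewrite -(cutP (leg gk k'')).1; apply: disj_comp.
Qed.

Lemma step_separated x x' : x <> x' ->
  separated (step_tag x) (step_tag x') (leg step_map x) (leg step_map x').
Proof.
case: x x' => [[k px] | y] [[k' px'] | y'] xx'; last first.
- have /(fdc_familyP AC closed)[_ disG] := fdcG.
  by right; apply/(disj_post AC)/disG => yy'; apply: xx'; rewrite yy'.
- exact: separatedC (piece_vs_low _ _).
- exact: piece_vs_low.
rewrite /separated /leg /= !comp_assoc.
case: (eqVneq k k') => [kk' | /eqP kk'].
  subst k'; have pxx' : px <> px' by move=> E; apply: xx'; rewrite E.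
  have [/(fdc_familyP AC closed)[_ dis] _] :=
    split_alongP complements (cut_fst (leg gk k)) (cut_in_D k).
  by right; apply/(disj_post AC)/dis.
case: (sep kk') => [[E gkk'] | D]; last by right; apply: disj_comp.
by case: (piece_vs_piece px px' E (cut_in_D k)) => [E' | D']; [left | right].
Qed.

End Refinement.

Lemma step_partial_solution : partial_solution (i0 :: s).
Proof.
have [G [fdcG G_cases]] :=
  extend_to_fdc closed complements (a := fun k => cut_snd (leg gk k)) (enum K)
    cut_in_D cut_snd_sep.
exists _, _, _, (@step_map G); split.
- exact: step_tag_in.
- exact: step_covers.
- exact: step_separated.
Qed.

End Step.

Lemma partial_solution_cons i0 s :
  i0 \notin s -> partial_solution s -> partial_solution (i0 :: s).
Proof.
by move=> i0s [K [Z [g [gk [gs covs sep]]]]]; apply: step_partial_solution gs covs sep.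
Qed.

Lemma partial_solution_all (s : seq I) : partial_solution s.
Proof.
elim: s => [|i0 s IH]; first exact: partial_solution_nil.
case: (boolP (i0 \in s)) => i0s; first exact: partial_solution_dup.
exact: partial_solution_cons.
Qed.

Section Pruning.
Variables (K : finType) (Z : K -> C) (g : K -> I) (gk : forall k, Hom (Z k) (A (g k))).
Hypotheses (covers_all : forall i, covers J (fiber_sieve gk i))
  (sep : forall k k', k <> k' -> separated (g k) (g k') (leg gk k) (leg gk k')).

Definition live : finType := {k : K | `[< ~ initial (Z k) >]}.

Definition live_map (x : live) : Hom (Z (val x)) (A (g (val x))) := gk (val x).

Lemma live_fiber_leg i (x : {k : live | g (val k) == i}) :
  to_slice (compm (f i) (fiber_mor live_map x)) = leg gk (val (val x)).
Proof.
pose to_B (t : {j : I & Hom (Z (val (val x))) (A j)}) :=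
  to_slice (compm (f (tag t)) (tagged t)).
exact: (congr1 to_B (fiber_morE live_map x) : _ = _).
Qed.

Lemma live_fiber_covers i : covering_family J (fiber_mor live_map (i := i)).
Proof.
apply: (top_trans (covers_all i)) => X h [k [u E]].
have gki : g k = i := congr1 tag E; subst i.
have {E} -> := eq_from_Tagged (esym E).
case: (pselect (initial (Z k))) => [iniZ | liveZ].
  exact/(covers_initial AC)/(initial_of_hom AC u).
apply: (coversS (top_max _ X)) => Y y _.
exists (exist _ (exist _ k (asboolT liveZ)) (eqxx (g k))), (compm u y).
by rewrite /= comp_assoc (_ : fiber_mor _ _ = gk k) //; apply: fiber_mor_tag.
Qed.

Lemma live_fiber_disj i (x x' : {k : live | g (val k) == i}) :
  x <> x' -> disj (fiber_mor live_map x) (fiber_mor live_map x').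
Proof.
move=> xx'; apply: (disj_postK (m := f i)).
apply: disj_eq (esym (live_fiber_leg x')) _; apply/disjC.
apply: disj_eq (esym (live_fiber_leg x)) _; apply/disjC.
have kk' : val (val x) <> val (val x') by move=> /val_inj /val_inj.
case: (sep kk') => [[_ gkk'] | //]; case: gkk'.
by rewrite (eqP (valP x)) (eqP (valP x')).
Qed.

Lemma live_W_morphism : W_morphism J live_map.
Proof.
split=> [x | i]; first exact: asboolW (valP x).
by apply/(fdc_familyP AC closed); split; [apply: live_fiber_covers | apply: live_fiber_disj].
Qed.

Lemma live_separated x x' : x <> x' ->
  (leg live_map x = leg live_map x' \/
   disjoint_maps (projT2 (leg live_map x)) (projT2 (leg live_map x'))) /\
  (leg live_map x = leg live_map x' -> g (val x) <> g (val x')).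
Proof.
move=> xx'; have kk' : val x <> val x' by move/val_inj.
case: (sep kk') => [[E gkk'] | D]; first by split; [left |].
split; first by right; apply: disj_disjoint_maps.
move=> E; have {}E : leg gk (val x) = leg gk (val x') := E.
by move: D; rewrite E => /disj_initial ini _; apply: asboolW (valP x') ini.
Qed.

End Pruning.

End Construction.

Theorem lemma5p12 (C : Cat) (AC : assembler C) (inD : C -> Prop)
    (AD : assembler (fullsub inD)) :
  closed_cat C ->
  is_sieve inD ->
  subassembler AC AD ->
  (forall X : C, inD X -> has_complements_for (atop AC) X) ->
  forall (I : finType) (A : I -> C) (B : C) (f : forall i, Hom (A i) B),
    (forall i i', i <> i' ->
       exists (P : C) (p1 : Hom P (A i)) (p2 : Hom P (A i')),
         is_pullback (f i) (f i') p1 p2 /\ inD P) ->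
    exists (K : finType) (Z : K -> C) (g : K -> I) (gk : forall k, Hom (Z k) (A (g k))),
      W_morphism (atop AC) gk /\
      forall k k' : K, k <> k' ->
        (existT (fun X : C => Hom X B) (Z k) (compm (f (g k)) (gk k)) =
           existT (fun X : C => Hom X B) (Z k') (compm (f (g k')) (gk k'))
         \/ disjoint_maps (compm (f (g k)) (gk k)) (compm (f (g k')) (gk k'))) /\
        (existT (fun X : C => Hom X B) (Z k) (compm (f (g k)) (gk k)) =
           existT (fun X : C => Hom X B) (Z k') (compm (f (g k')) (gk k')) ->
         g k <> g k').
Proof.
move=> closed inD_sieve _ complements I A B f pullback_in_D.
have [K [Z [g [gk [_ covers_s sep]]]]] :=
  partial_solution_all closed inD_sieve complements pullback_in_D (enum I).
have covers_all i : covers (atop AC) (fiber_sieve gk i) by apply: covers_s; rewrite mem_enum.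
exists _, _, _, (live_map gk); split.
  exact (live_W_morphism closed covers_all sep).
exact (live_separated closed sep).
Qed.
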